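(* Let $H\le G_{d,k}$. Then $\widetilde{\mathfrak X}_{d,k}(H)$ is a simplicial complex (every cell has multiplicity $1$) if and only if $H$ satisfies the intersection property: for every nonempty $J\subseteq[\![d]\!]$ and every $g\in G_{d,k}$, $$\bigcap_{i\in J}\mathcal A_{[K_{\widehat i}g]_H}=\mathcal A_{[K_{\widehat J}g]_H}.$$ If moreover $H$ is normal in $G_{d,k}$, then $\widetilde{\mathfrak X}_{d,k}(H)$ is a simplicial complex if and only if this equality holds for every nonempty $J$ with $g=e$.
   Context: Fix $d,k\ge1$, $[\![d]\!]=\{0,\dots,d\}$. $G_{d,k}=\langle\alpha_0,\dots,\alpha_d\mid\alpha_i^k=e\rangle$; for $J\subseteq[\![d]\!]$, $K_J=\langle\alpha_j:j\in J\rangle$, $\widehat J=[\![d]\!]\setminus J$, $\widehat i=\widehat{\{i\}}$. For $H\le G_{d,k}$, $[K_{\widehat J}g]_H=\{K_{\widehat J}gh:h\in H\}$ and $\mathcal A_{[K_{\widehat J}g]_H}=\{g'\in G_{d,k}:[K_{\widehat J}g']_H=[K_{\widehat J}g]_H\}$. The multicomplex $\widetilde{\mathfrak X}_{d,k}(H)$ has as multicells of dimension $|J|-1$ the classes $[K_{\widehat J}g]_H$, the multicell $[K_{\widehat J}g]_H$ lying over the cell $\Phi([K_{\widehat J}g]_H)=\{[K_{\widehat i}g]_H:i\in J\}$ (well defined); the multiplicity of a cell $\sigma$ is $|\Phi^{-1}(\sigma)|$. Thus $\widetilde{\mathfrak X}_{d,k}(H)$ is a simplicial complex iff $\Phi$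 is injective. *)

(* The group G_{d,k} = free product of d+1 copies of Z/k is
   infinite, so it is modelled concretely by its normal form: reduced words. *)
From mathcomp Require Import all_boot.
Set Implicit Arguments. Unset Strict Implicit. Unset Printing Implicit Defensive.

(* A letter (i, a) stands for alpha_i ^ a, with i in [[d]] = 'I_(d+1). *)
Definition letter (d : nat) := ('I_d.+1 * nat)%type.
Definition word (d : nat) := seq (letter d).

Definition reduced (d k : nat) (w : word d) : bool :=
  all (fun p : letter d => (0 < p.2 < k)%N) w &&
  sorted (fun p q : letter d => p.1 != q.1) w.

Definition cons_letter (d k : nat) (l : letter d) (w : word d) : word d :=
  let a := (l.2 %% k)%N in
  if a == 0%N then w else
  match w with
  | [::] => [:: (l.1, a)]
  | p :: w' =>
      if l.1 == p.1 then
        let c := ((a + p.2) %% k)%N in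
        if c == 0%N then w' else (l.1, c) :: w'
      else (l.1, a) :: w
  end.

Definition gmul (d k : nat) (x y : word d) : word d :=
  foldr (@cons_letter d k) y x.
Definition gone (d : nat) : word d := [::].
Definition ginv (d k : nat) (x : word d) : word d :=
  map (fun p : letter d => (p.1, (k - p.2)%N)) (rev x).

Definition is_subgroup (d k : nat) (H : word d -> Prop) : Prop :=
  (forall x, H x -> reduced k x) /\
  H (gone d) /\
  (forall x y, H x -> H y -> H (gmul k x y)) /\
  (forall x, H x -> H (ginv k x)).

Definition is_normal (d k : nat) (H : word d -> Prop) : Prop :=
  forall x h, reduced k x -> H h -> H (gmul k (gmul k (ginv k x) h) x).

Definition inK (d k : nat) (J : {set 'I_d.+1}) (g : word d) : Prop :=
  exists s : word d, all (fun p : letter d => p.1 \in J) s /\ gmul k s (gone d) = g.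

Definition rcoset_eq (d k : nat) (J : {set 'I_d.+1}) (x y : word d) : Prop :=
  forall z, reduced k z ->
    ((exists c, inK k J c /\ z = gmul k c x) <-> (exists c, inK k J c /\ z = gmul k c y)).

(* [K_{hat J} g]_H = [K_{hat J} g']_H, equality of the sets of cosets
   {K_{hat J} g h : h in H}.  Here Jh is the complement hat J. *)
Definition class_eq (d k : nat) (H : word d -> Prop) (Jh : {set 'I_d.+1})
  (g g' : word d) : Prop :=
  (forall h, H h -> exists h', H h' /\ rcoset_eq k Jh (gmul k g h) (gmul k g' h')) /\
  (forall h', H h' -> exists h, H h /\ rcoset_eq k Jh (gmul k g h) (gmul k g' h')).

Definition inA (d k : nat) (H : word d -> Prop) (Jh : {set 'I_d.+1}) (g g' : word d)
  : Prop := reduced k g' /\ class_eq k H Jh g' g.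

(* Multicells of dimension |J|-1: pairs (J, g) (J nonempty) up to
   [K_{hat J} g]_H = [K_{hat J'} g']_H.  Phi sends it to the cell
   { (i, [K_{hat i} g]_H) : i in J } (vertices carry their type i). *)
Definition multicell_eq (d k : nat) (H : word d -> Prop)
  (J : {set 'I_d.+1}) (g : word d) (J' : {set 'I_d.+1}) (g' : word d) : Prop :=
  J = J' /\ class_eq k H (~: J) g g'.

Definition Phi_eq (d k : nat) (H : word d -> Prop)
  (J : {set 'I_d.+1}) (g : word d) (J' : {set 'I_d.+1}) (g' : word d) : Prop :=
  J = J' /\ (forall i, i \in J -> class_eq k H [set~ i] g g').

(* X~_{d,k}(H) is a simplicial complex iff Phi is injective on multicells. *)
Definition is_simplicial (d k : nat) (H : word d -> Prop) : Prop :=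
  forall (J J' : {set 'I_d.+1}) (g g' : word d),
    J != set0 -> J' != set0 -> reduced k g -> reduced k g' ->
    Phi_eq k H J g J' g' -> multicell_eq k H J g J' g'.

Definition intersection_eq (d k : nat) (H : word d -> Prop)
  (J : {set 'I_d.+1}) (g : word d) : Prop :=
  forall g', (forall i, i \in J -> inA k H [set~ i] g g') <-> inA k H (~: J) g g'.

Definition intersection_property (d k : nat) (H : word d -> Prop) : Prop :=
  forall (J : {set 'I_d.+1}) (g : word d), J != set0 -> reduced k g ->
    intersection_eq k H J g.

From mathcomp Require Import all_boot.
Set Implicit Arguments. Unset Strict Implicit.

(** Since [K_{hat J}] lies in every [K_{hat i}] with [i \in J], the inclusion
    [A_{[K_{hat J} g]_H} \subset \bigcap_(i in J) A_{[K_{hat i} g]_H}] always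
    holds; the reverse inclusion says that the vertex classes [[K_{hat i} g']_H]
    determine the multicell [[K_{hat J} g']_H], which is injectivity of Phi.
    Concretely, [[K_A x]_H = [K_A y]_H] iff [x \in K_A y H]; when H is normal
    this depends only on [x y^-1], so testing at [g = e] suffices. *)

Section ReducedWords.

Variables (d k : nat).
Hypothesis k_gt0 : 0 < k.

Implicit Types (w x y : word d) (A B : {set 'I_d.+1}).

Lemma reduced_cons (p : letter d) w :
  reduced k (p :: w) =
  [&& 0 < p.2 < k, reduced k w & if w is q :: _ then p.1 != q.1 else true].
Proof.
rewrite /reduced /=; case: w => [|q w] /=; first by rewrite !andbT.
by case: (0 < p.2 < k); case: (0 < q.2 < k); case: all; case: (p.1 != q.1); case: path.
Qed.

Lemma reduced_cons_letter (l : letter d) w :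
  reduced k w -> reduced k (cons_letter k l w).
Proof.
case: l => i b; rewrite /cons_letter /=.
case: eqP => [//|/eqP a0] rw.
case: w rw => [|p w] rw; first by rewrite reduced_cons /= lt0n a0 ltn_pmod.
move: rw; rewrite reduced_cons => /and3P [hp rw hw].
case: eqP => [ei|/eqP ne].
  case: eqP => [//|/eqP c0].
  rewrite reduced_cons /= lt0n c0 ltn_pmod // rw /=.
  by case: w hw {rw} => // q w; rewrite ei.
by rewrite reduced_cons /= lt0n a0 ltn_pmod //= reduced_cons hp rw hw.
Qed.

Lemma reduced_gmul x y : reduced k y -> reduced k (gmul k x y).
Proof. by move=> ry; elim: x => //= l x IH; apply: reduced_cons_letter. Qed.

Lemma cons_letter_modn (i : 'I_d.+1) a b w : a %% k = b %% k ->
  cons_letter k (i, a) w = cons_letter k (i, b) w.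
Proof. by rewrite /cons_letter /= => ->. Qed.

Lemma cons_letter0 (i : 'I_d.+1) a w : a %% k = 0 -> cons_letter k (i, a) w = w.
Proof. by rewrite /cons_letter /= => ->. Qed.

Lemma cons_letterD (i : 'I_d.+1) a b w : reduced k w ->
  cons_letter k (i, a) (cons_letter k (i, b) w) = cons_letter k (i, a + b) w.
Proof.
move=> rw.
have [b0|bn0] := eqVneq (b %% k) 0.
  by rewrite (cons_letter0 _ _ b0); apply: cons_letter_modn; rewrite -modnDmr b0 addn0.
have [a0|an0] := eqVneq (a %% k) 0.
  rewrite cons_letter0 //; apply: cons_letter_modn.
  by rewrite -modnDml a0 add0n.
rewrite {2}/cons_letter /= (negbTE bn0).
case: w rw => [|p w] rw.
  by rewrite /cons_letter /= (negbTE an0) eqxx /= modnDm.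
move: rw; rewrite reduced_cons => /and3P [/andP [p0 pk] rw hw].
have p2 : p.2 %% k = p.2 by rewrite modn_small.
case: p p0 pk hw p2 => j x /= p0 pk hw p2.
have [ij|ne] := eqVneq i j; last first.
  rewrite /cons_letter /= ifN // eqxx modnDm.
  by have [ab0|ab0] := eqVneq ((a + b) %% k) 0 => //=; rewrite (negbTE ne).
subst j; rewrite modnDml.
have [c0|c0] := eqVneq ((b + x) %% k) 0.
  rewrite /cons_letter /= (negbTE an0) eqxx.
  have e1 : ((a + b) %% k + x) %% k = a %% k.
    by rewrite modnDml -addnA -modnDmr c0 addn0.
  rewrite e1 (negbTE an0).
  have [ab0|ab0] := eqVneq ((a + b) %% k) 0.
    have ex : x = a %% k by rewrite -e1 ab0 add0n p2.
    by case: w {rw} hw => [|q w] /= hw; rewrite ?(negbTE hw) ex.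
  by case: w {rw} hw => [|q w] /= hw; rewrite ?(negbTE hw).
rewrite /cons_letter /= (negbTE an0) eqxx modnDmr addnA.
rewrite -addnA modnDml addnA -(modnDml (a + b)).
have [ab0|ab0] := eqVneq ((a + b) %% k) 0 => //=.
by rewrite ab0 add0n p2; move: p0; rewrite lt0n => /negbTE ->.
Qed.

Lemma gmul_cons_letter (l : letter d) x y : reduced k x -> reduced k y ->
  gmul k (cons_letter k l x) y = cons_letter k l (gmul k x y).
Proof.
case: l => i b rx ry.
have [b0|bn0] := eqVneq (b %% k) 0; first by rewrite !cons_letter0.
rewrite {1}/cons_letter /= (negbTE bn0).
case: x rx => [|[j x] u] rx.
  by rewrite /= (@cons_letter_modn _ (b %% k) b) // modn_mod.
move: rx; rewrite reduced_cons => /and3P [_ ru _] /=.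
have [<-|ne] := eqVneq i j; last first.
  by rewrite /= (@cons_letter_modn _ (b %% k) b) // modn_mod.
rewrite cons_letterD ?reduced_gmul //.
have [c0|c0] := eqVneq ((b %% k + x) %% k) 0.
  by rewrite cons_letter0 // -modnDml.
by rewrite /= (@cons_letter_modn _ _ (b + x)) // modn_mod modnDml.
Qed.

Lemma gmulA x y w : reduced k y -> reduced k w ->
  gmul k (gmul k x y) w = gmul k x (gmul k y w).
Proof.
move=> ry rw; elim: x => //= l x IH.
by rewrite gmul_cons_letter ?reduced_gmul // IH.
Qed.

Lemma gmulg1 x : reduced k x -> gmul k x (gone d) = x.
Proof.
elim: x => // p x IH; rewrite reduced_cons => /and3P [/andP [p0 pk] rx hx] /=.
rewrite IH // /cons_letter modn_small // ifN; last by rewrite -lt0n.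
case: x {IH rx} hx => [|q x] hx; first by rewrite -surjective_pairing.
by rewrite ifN // -surjective_pairing.
Qed.

Lemma reduced_ginv x : reduced k x -> reduced k (ginv k x).
Proof.
rewrite /reduced /ginv all_map sorted_map rev_sorted all_rev => /andP [ha hs].
apply/andP; split.
  apply: sub_all ha => p /= /andP [p0 pk]; rewrite subn_gt0 pk /=.
  by rewrite ltn_subrL p0 (leq_trans _ pk).
by apply: sub_sorted hs => p q /=; rewrite eq_sym.
Qed.

Lemma ginv_cons (p : letter d) x :
  ginv k (p :: x) = rcons (ginv k x) (p.1, k - p.2).
Proof. by rewrite /ginv rev_cons map_rcons. Qed.

Lemma gmulVg x : reduced k x -> gmul k (ginv k x) x = gone d.
Proof.
elim: x => // p x IH; rewrite reduced_cons => /and3P [/andP [p0 pk] rx _].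
rewrite ginv_cons /gmul foldr_rcons -/(gmul k _ _).
suff -> : cons_letter k (p.1, k - p.2) (p :: x) = x by apply: IH.
have kp_mod : (k - p.2) %% k = k - p.2 by rewrite modn_small // ltn_subrL p0 k_gt0.
have kp_neq0 : (k - p.2 == 0) = false by rewrite subn_eq0 leqNgt pk.
by rewrite /cons_letter /= kp_mod kp_neq0 eqxx (subnK (ltnW pk)) modnn.
Qed.

Lemma ginvK x : reduced k x -> ginv k (ginv k x) = x.
Proof.
move=> /andP [ha _]; rewrite /ginv [in rev (map _ (rev x))]map_rev revK -map_comp.
elim: x ha => //= p x IH /andP [/andP [_ pk] ha].
by rewrite IH // (subKn (ltnW pk)) -surjective_pairing.
Qed.

Lemma gmulgV x : reduced k x -> gmul k x (ginv k x) = gone d.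
Proof. by move=> rx; rewrite -{1}(ginvK rx) gmulVg // reduced_ginv. Qed.

Definition supported A (w : word d) := all (fun p : letter d => p.1 \in A) w.

Lemma supported_cons_letter A (l : letter d) w :
  l.1 \in A -> supported A w -> supported A (cons_letter k l w).
Proof.
case: l => i b /= iA hw; rewrite /cons_letter /=.
case: ifP => // _; case: w hw => [|p w] /=; first by rewrite iA.
move=> /andP [pA hw]; case: ifP => _; first by case: ifP => _ /=; rewrite ?iA ?hw.
by rewrite /= iA pA hw.
Qed.

Lemma supported_gmul A x y :
  supported A x -> supported A y -> supported A (gmul k x y).
Proof.
move=> sx sy; elim: x sx => //= l x IH /andP [lA sx].
by apply: supported_cons_letter => //; apply: IH.
Qed.

Lemma inKP A c : inK k A c <-> reduced k c /\ supported A c.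
Proof.
split; last by move=> [rc sc]; exists c; rewrite gmulg1.
move=> [s [ss <-]]; split; first exact: reduced_gmul.
exact: supported_gmul.
Qed.

Lemma inK_reduced A c : inK k A c -> reduced k c.
Proof. by case/inKP. Qed.

Lemma inK1 A : inK k A (gone d).
Proof. by exists [::]. Qed.

Lemma inKM A c c' : inK k A c -> inK k A c' -> inK k A (gmul k c c').
Proof.
move=> /inKP [rc sc] /inKP [rc' sc'].
by apply/inKP; split; [apply: reduced_gmul | apply: supported_gmul].
Qed.

Lemma inKV A c : inK k A c -> inK k A (ginv k c).
Proof.
move=> /inKP [rc sc]; apply/inKP; split; first exact: reduced_ginv.
by rewrite /supported /ginv all_map all_rev.
Qed.

Lemma inK_subset A B c : A \subset B -> inK k A c -> inK k B c.
Proof.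
move=> /subsetP sAB /inKP [rc sc]; apply/inKP; split => //.
by apply: sub_all sc => p /sAB.
Qed.

Definition in_rcoset A x y := exists2 c, inK k A c & x = gmul k c y.

Lemma rcoset_eqP A x y : reduced k x -> reduced k y ->
  rcoset_eq k A x y <-> in_rcoset A x y.
Proof.
move=> rx ry; split.
  move=> /(_ x rx) [/(_ (ex_intro _ (gone d) (conj (inK1 _) erefl)))].
  by move=> [c [Kc ->]] _; exists c.
move=> [c Kc ->] z rz; have rc := inK_reduced Kc; split.
  move=> [c' [Kc' ->]]; exists (gmul k c' c); split; first exact: inKM.
  by rewrite gmulA.
move=> [c' [Kc' ->]]; exists (gmul k c' (ginv k c)).
split; first by apply: inKM => //; apply: inKV.
by rewrite gmulA ?reduced_ginv ?reduced_gmul // -(gmulA (ginv k c) rc ry) gmulVg.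
Qed.

Variable H : word d -> Prop.
Hypothesis H_subgroup : is_subgroup k H.

Lemma class_eqP A g g' : reduced k g -> reduced k g' ->
  class_eq k H A g g' <-> exists2 h, H h & in_rcoset A g (gmul k g' h).
Proof.
case: H_subgroup => [HR [H1 [HM HV]]] rg rg'; split.
  move=> [/(_ _ H1) [h [Hh]]]; rewrite gmulg1 // => hc _.
  by exists h => //; apply/rcoset_eqP => //; apply: reduced_gmul; apply: HR.
move=> [h0 Hh0 [c Kc eg]]; have rh0 := HR _ Hh0; have rc := inK_reduced Kc.
split=> [h Hh | h' Hh'].
  have rh := HR _ Hh; exists (gmul k h0 h); split; first exact: HM.
  apply/rcoset_eqP; try by apply: reduced_gmul; auto.
  by exists c => //; rewrite eg !gmulA ?reduced_gmul.
have rh' := HR _ Hh'; exists (gmul k (ginv k h0) h'); split.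
  by apply: HM => //; apply: HV.
apply/rcoset_eqP; try by apply: reduced_gmul; auto.
exists c => //; rewrite eg (gmulA c) ?reduced_gmul // (gmulA g') ?reduced_gmul //.
by rewrite -(gmulA h0 (reduced_ginv rh0) rh') gmulgV.
Qed.

Lemma class_eq_subset A B g g' : reduced k g -> reduced k g' ->
  A \subset B -> class_eq k H A g g' -> class_eq k H B g g'.
Proof.
move=> rg rg' sAB /(class_eqP _ rg rg') [h Hh [c Kc eg]].
by apply/(class_eqP _ rg rg'); exists h => //; exists c => //; apply: inK_subset Kc.
Qed.

Lemma class_eq_translate A x y : is_normal k H -> reduced k x -> reduced k y ->
  class_eq k H A x y <-> class_eq k H A (gmul k x (ginv k y)) (gone d).
Proof.
move=> Hn rx ry; have ryi := reduced_ginv ry.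
have rxy : reduced k (gmul k x (ginv k y)) by apply: reduced_gmul.
have r1 : reduced k (gone d) by [].
have HR := H_subgroup.1.
split.
  move=> /(class_eqP _ rx ry) [h Hh [c Kc ex]]; have rh := HR _ Hh.
  apply/(class_eqP _ rxy r1); exists (gmul k (gmul k y h) (ginv k y)); first by have := Hn _ _ ryi Hh; rewrite ginvK.
  by exists c => //=; rewrite ex (gmulA c) // reduced_gmul.
move=> /(class_eqP _ rxy r1) [h Hh [c Kc ex]]; have rh := HR _ Hh.
have rc := inK_reduced Kc; apply/(class_eqP _ rx ry).
exists (gmul k (gmul k (ginv k y) h) y); first exact: Hn.
exists c => //.
have -> : x = gmul k (gmul k x (ginv k y)) y by rewrite (gmulA x) // gmulVg // gmulg1.
have ryh : reduced k (gmul k (ginv k y) h) by apply: reduced_gmul.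
by rewrite ex (gmulA c) // -(gmulA y ryh ry) -(gmulA y ryi rh) gmulgV.
Qed.

Lemma intersection_eqP J g : J != set0 -> reduced k g ->
  intersection_eq k H J g <->
  (forall g', reduced k g' -> (forall i, i \in J -> class_eq k H [set~ i] g' g) ->
     class_eq k H (~: J) g' g).
Proof.
move=> /set0Pn [i0 i0J] rg; split.
  by move=> hJ g' rg' hi; apply: ((hJ g').1 _).2 => i iJ; split; auto.
move=> hJ g'; split.
  move=> hi; have [rg' _] := hi _ i0J.
  by split=> //; apply: hJ => // i /hi [].
move=> [rg' ce] i iJ; split => //.
by apply: class_eq_subset ce => //; rewrite setCS sub1set.
Qed.

Lemma simplicial_iff_intersection_property :
  is_simplicial k H <-> intersection_property k H.
Proof.
split=> [hs J g J0 rg | hip J J' g g' J0 _ rg rg' [<- hi]].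
  by apply/intersection_eqP => // g' rg' hi; case: (hs J J g' g J0 J0 rg' rg (conj erefl hi)).
by split=> //; apply: (intersection_eqP J0 rg').1 (hip J g' J0 rg') g rg hi.
Qed.

Lemma intersection_eq_translate J g : is_normal k H -> J != set0 -> reduced k g ->
  intersection_eq k H J (gone d) -> intersection_eq k H J g.
Proof.
move=> Hn J0 rg /(intersection_eqP J0 (erefl : reduced k (gone d))) he.
apply/intersection_eqP => // g' rg' hi.
have rg'g : reduced k (gmul k g' (ginv k g)) by apply: reduced_gmul; apply: reduced_ginv.
apply/(class_eq_translate _ Hn rg' rg); apply: he => // i iJ.
exact/(class_eq_translate _ Hn rg' rg)/hi.
Qed.

End ReducedWords.

Theorem proposition9 (d k : nat) (hd : (1 <= d)%N) (hk : (1 <= k)%N)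
  (H : word d -> Prop) (HH : is_subgroup k H) :
  (is_simplicial k H <-> intersection_property k H) /\
  (is_normal k H ->
     (is_simplicial k H <->
      forall J : {set 'I_d.+1}, J != set0 -> intersection_eq k H J (gone d))).
Proof.
have simplicialE := simplicial_iff_intersection_property hk HH.
split=> // Hn; split.
  by move=> /simplicialE hip J J0; apply: hip.
by move=> he; apply/simplicialE => J g J0 rg; apply: intersection_eq_translate; auto.
Qed.
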